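(* Fix integers $h\ge0$, $n\ge1$, a multi-index $\gamma\in\mathbb{Z}_{\ge0}^n$, and set $k=|\gamma|$. Then for each of the $k^h$ functions $\pi:[h]\to[k]$ and each $r\in[k]$ there exist integers $h'_{\pi,r}\in\{0,1,\dots,h\}$, $t'_{\pi,r}\ge0$ and $j'_{\pi,r}\in[n]$ (depending only on $h,\gamma,\pi,r$) such that for every sequence $L^{(1)},\dots,L^{(T)}\in\mathbb{R}^n$ and every $t\in[T-h]$, $$(D_h(L^\gamma))^{(t)}=\sum_{\pi:[h]\to[k]}\prod_{r=1}^k\big(D_{h'_{\pi,r}}(L(j'_{\pi,r}))\big)^{(t+t'_{\pi,r})}.$$ Moreover: (1) for each $\pi$ and $r$, $h'_{\pi,r}=|\{q\in[h]:\pi(q)=r\}|$, so $\sum_{r=1}^kh'_{\pi,r}=h$; (2) for each $\pi,r$, $0\le t'_{\pi,r}+h'_{\pi,r}\le h$; (3) for each $\pi$ and each $j\in[n]$, $\gamma_j=|\{r\in[k]:j'_{\pi,r}=j\}|$.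
   Context: $L^\gamma$ denotes the scalar sequence $(L^\gamma)^{(t)}=\prod_{j=1}^n(L^{(t)}(j))^{\gamma_j}$, and $L(j)$ the scalar sequence $(L^{(t)}(j))_t$ of $j$-th coordinates. Finite differences: $(D_0L)^{(t)}=L^{(t)}$ and $(D_hL)^{(t)}=(D_{h-1}L)^{(t+1)}-(D_{h-1}L)^{(t)}$. An empty sum is $0$ and an empty product is $1$. *)

From HB Require Import structures.
From mathcomp Require Import all_boot all_order all_algebra.
From mathcomp Require Import reals.
Set Implicit Arguments. Unset Strict Implicit. Unset Printing Implicit Defensive.
Import Order.TTheory GRing.Theory Num.Theory.
Local Open Scope ring_scope.

Fixpoint D {R : pzRingType} (h : nat) (f : nat -> R) : nat -> R :=
  match h with
  | 0 => f
  | h'.+1 => fun t => D h' f t.+1 - D h' f t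
  end.

Definition Lpow {R : pzRingType} {n : nat} (L : nat -> 'I_n -> R) (gamma : 'I_n -> nat)
  : nat -> R := fun t => \prod_(j < n) L t j ^+ gamma j.

Definition Lcoord {R : pzRingType} {n : nat} (L : nat -> 'I_n -> R) (j : 'I_n)
  : nat -> R := fun t => L t j.

(* Write L^gamma = prod_{r < k} L(c r), where k = |gamma| and the
   "colouring" c : [k] -> [n] lists every coordinate j exactly gamma_j
   times (c r is the r-th entry of the sequence 0^gamma_0 1^gamma_1 ...).
   The difference D_h of a product of k sequences obeys a Leibniz rule:
   it is a sum over all maps pi : [h] -> [k], which distribute the h
   difference steps among the k factors, of the product over r of
   D_{m_r}(F_r) evaluated at time t + o_r, where m_r = #pi^-1(r) is the
   number of steps given to factor r and o_r = #pi^-1([0, r)) the number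
   of steps given to earlier factors.  The rule follows by induction on h
   from a telescoping identity for a difference of two products, after
   splitting a map [h+1] -> [k] into its restriction to [h] and its last
   value.  The counting properties of m_r, o_r and c are proved
   separately, and the theorem combines these facts with
   hp = m, tp = o and jp = c. *)

From HB Require Import structures.
From mathcomp Require Import all_boot all_order all_algebra.
From mathcomp Require Import reals.
Import Order.TTheory GRing.Theory Num.Theory.
Local Open Scope ring_scope.

Lemma card_set_nat (T : finType) (P : pred T) :
  #|[set x | P x]| = (\sum_x P x)%N.
Proof. by rewrite -sum1dep_card big_mkcond; apply: eq_bigr => x _; case: (P x). Qed.

Definition extend {h k} (pi : {ffun 'I_h -> 'I_k}) (r : 'I_k) :
    {ffun 'I_h.+1 -> 'I_k} :=
  [ffun q => if unlift ord_max q is Some q' then pi q' else r].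

Lemma extend_widen {h k} (pi : {ffun 'I_h -> 'I_k}) r (q : 'I_h) :
  extend pi r (widen_ord (leqnSn h) q) = pi q.
Proof.
have -> : widen_ord (leqnSn h) q = lift ord_max q.
  by apply: val_inj; rewrite /= /bump leqNgt ltn_ord.
by rewrite ffunE liftK.
Qed.

Lemma extend_max {h k} (pi : {ffun 'I_h -> 'I_k}) r : extend pi r ord_max = r.
Proof. by rewrite ffunE unlift_none. Qed.

(* extend is a bijection [h] -> [k] times [k] onto [h+1] -> [k], so a sum
   over maps on [h+1] splits into a double sum. *)
Lemma sum_ffunS {h k} (V : nmodType) (F : {ffun 'I_h.+1 -> 'I_k} -> V) :
  \sum_p F p = \sum_(pi : {ffun 'I_h -> 'I_k}) \sum_(r < k) F (extend pi r).
Proof.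
rewrite pair_big /= (reindex (fun pr => extend pr.1 pr.2)) //=.
apply: onW_bij.
exists (fun p : {ffun 'I_h.+1 -> 'I_k} => ([ffun q => p (lift ord_max q)], p ord_max)).
  move=> [pi r] /=; congr pair; last exact: extend_max.
  by apply/ffunP => q; rewrite !ffunE liftK.
move=> p; apply/ffunP => q; rewrite ffunE.
by case: unliftP => [q' ->|->]; rewrite ?ffunE.
Qed.

Lemma count_extend {h k} (P : pred 'I_k) (pi : {ffun 'I_h -> 'I_k}) r :
  #|[set q | P (extend pi r q)]| = (#|[set q | P (pi q)]| + P r)%N.
Proof.
rewrite !card_set_nat big_ord_recr /= extend_max.
by congr (_ + _)%N; apply: eq_bigr => q _; rewrite extend_widen.
Qed.

Definition mult {h k} (pi : {ffun 'I_h -> 'I_k}) (r : 'I_k) : nat :=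
  #|[set q | pi q == r]|.

(* offset pi r: the number of steps assigned to the factors before r;
   this is the time shift at which factor r is evaluated. *)
Definition offset {h k} (pi : {ffun 'I_h -> 'I_k}) (r : 'I_k) : nat :=
  #|[set q | (pi q < r)%N]|.

Lemma mult_extend {h k} (pi : {ffun 'I_h -> 'I_k}) r s :
  mult (extend pi r) s = (mult pi s + (r == s))%N.
Proof. exact: (count_extend (pred1 s)). Qed.

Lemma offset_extend {h k} (pi : {ffun 'I_h -> 'I_k}) r (s : 'I_k) :
  offset (extend pi r) s = (offset pi s + (r < s))%N.
Proof. exact: (count_extend (fun x : 'I_k => x < s)%N). Qed.

Lemma mult0 {k} (pi : {ffun 'I_0 -> 'I_k}) r : mult pi r = 0%N.
Proof. by rewrite /mult card_set_nat big_ord0. Qed.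

Lemma offset0 {k} (pi : {ffun 'I_0 -> 'I_k}) r : offset pi r = 0%N.
Proof. by rewrite /offset card_set_nat big_ord0. Qed.

(* The fibres of pi partition [h]. *)
Lemma sum_mult {h k} (pi : {ffun 'I_h -> 'I_k}) : (\sum_r mult pi r)%N = h.
Proof.
rewrite -[RHS](card_ord h) -sum1_card (partition_big pi xpredT) //=.
by apply: eq_bigr => r _; rewrite sum1dep_card.
Qed.

Lemma offset_mult_le {h k} (pi : {ffun 'I_h -> 'I_k}) r :
  (offset pi r + mult pi r <= h)%N.
Proof.
rewrite /offset /mult !card_set_nat -big_split /=.
rewrite -[X in (_ <= X)%N](card_ord h) -sum1_card.
apply: leq_sum => q _; case: (ltngtP (pi q) r) => [lt_qr|lt_rq|/val_inj->].
- by rewrite -val_eqE /= (ltn_eqF lt_qr).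
- by rewrite -val_eqE /= (gtn_eqF lt_rq).
- by rewrite eqxx.
Qed.

Section Leibniz.
Variable R : pzRingType.

Lemma eq_D h (f g : nat -> R) : f =1 g -> D h f =1 D h g.
Proof. by move=> eq_fg; elim: h => [|h IH] t //=; rewrite !IH. Qed.

Lemma prodrB_telescope m (f g : 'I_m -> R) :
  \prod_(s < m) f s - \prod_(s < m) g s =
  \sum_(r < m) \prod_(s < m)
     (if (s < r)%N then g s else if s == r then f s - g s else f s).
Proof.
elim: m f g => [|m IH] f g; first by rewrite !big_ord0 subrr.
rewrite !big_ord_recr /= ltnn eqxx.
have head_terms : \sum_(r < m) \prod_(s < m.+1)
    (if (s < widen_ord (leqnSn m) r)%N then g s
     else if s == widen_ord (leqnSn m) r then f s - g s else f s) =
  (\prod_(s < m) f (widen_ord (leqnSn m) s)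
   - \prod_(s < m) g (widen_ord (leqnSn m) s)) * f ord_max.
  rewrite IH mulr_suml; apply: eq_bigr => r _; rewrite big_ord_recr /=.
  by rewrite ltnNge (ltnW (ltn_ord r)) -val_eqE /= (gtn_eqF (ltn_ord r)).
rewrite head_terms.
under [X in _ = _ + X * _]eq_bigr => s _ do rewrite /= ltn_ord.
by rewrite mulrBl mulrBr addrA subrK.
Qed.

Lemma D_prod k (F : 'I_k -> nat -> R) h t :
  D h (fun t => \prod_(r < k) F r t) t =
  \sum_(pi : {ffun 'I_h -> 'I_k})
     \prod_(r < k) D (mult pi r) (F r) (t + offset pi r)%N.
Proof.
elim: h t => [|h IH] t.
  pose pi0 : {ffun 'I_0 -> 'I_k} := ffun0 (card_ord 0).
  rewrite (big_pred1 pi0) => [|pi]; last by apply/esym/eqP/ffunP => -[].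
  by apply: eq_bigr => r _; rewrite mult0 offset0 addn0.
rewrite /= (IH t.+1) (IH t) -sumrB sum_ffunS.
apply: eq_bigr => pi _; rewrite prodrB_telescope.
apply: eq_bigr => r _; apply: eq_bigr => s _.
rewrite mult_extend offset_extend.
case: (ltngtP s r) => [s_lt_r|r_lt_s|/val_inj->].
- by rewrite -val_eqE /= (gtn_eqF s_lt_r) !addn0.
- by rewrite -!val_eqE /= (ltn_eqF r_lt_s) (gtn_eqF r_lt_s) !addn0 addn1 addnS.
- by rewrite eqxx !addn0 addn1.
Qed.

End Leibniz.

Section Expansion.
Context {n : nat} (gamma : 'I_n -> nat).

Definition expand : seq 'I_n := flatten [seq nseq (gamma j) j | j <- enum 'I_n].

Lemma size_expand : size expand = (\sum_(j < n) gamma j)%N.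
Proof.
rewrite size_flatten /shape -map_comp sumnE big_map big_enum /=.
by apply: eq_bigr => j _; rewrite size_nseq.
Qed.

Lemma count_expand j : count_mem j expand = gamma j.
Proof.
rewrite count_flatten -map_comp sumnE big_map big_enum /=.
rewrite (bigD1 j) //= count_nseq /= eqxx mul1n big1 ?addn0 // => i ne_ij.
by rewrite count_nseq /= (negbTE ne_ij) mul0n.
Qed.

Lemma prod_expand (R : comPzSemiRingType) (F : 'I_n -> R) :
  \prod_(j <- expand) F j = \prod_(j < n) F j ^+ gamma j.
Proof.
rewrite big_flatten big_map big_enum /=.
by apply: eq_bigr => j _; rewrite big_nseq iter_mulr_1.
Qed.

Lemma card_colour (j0 j : 'I_n) :
  #|[set r : 'I_(\sum_(j < n) gamma j) | nth j0 expand r == j]| = gamma j.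
Proof.
rewrite -sum1dep_card -(big_mkord (fun r => nth j0 expand r == j) (fun=> 1%N)).
by rewrite -size_expand -(big_nth j0 (pred1 j) (fun=> 1%N)) sum1_count count_expand.
Qed.

Lemma prod_colour (R : comPzSemiRingType) (j0 : 'I_n) (F : 'I_n -> R) :
  \prod_(r < \sum_(j < n) gamma j) F (nth j0 expand r) = \prod_(j < n) F j ^+ gamma j.
Proof.
rewrite -(big_mkord xpredT (fun r => F (nth j0 expand r))).
by rewrite -size_expand -(big_nth j0 xpredT F) prod_expand.
Qed.

End Expansion.

Theorem lemma4p5 (R : realType) (h n : nat) (gamma : 'I_n -> nat) :
  (0 < n)%N ->
  let k := (\sum_(j < n) gamma j)%N in
  exists (hp tp : {ffun 'I_h -> 'I_k} -> 'I_k -> nat)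
         (jp : {ffun 'I_h -> 'I_k} -> 'I_k -> 'I_n),
    (forall pi r, hp pi r <= h)%N /\
    (forall pi r, hp pi r = #|[set q : 'I_h | pi q == r]|)%N /\
    (forall pi, \sum_(r < k) hp pi r = h)%N /\
    (forall pi r, tp pi r + hp pi r <= h)%N /\
    (forall pi (j : 'I_n), gamma j = #|[set r : 'I_k | jp pi r == j]|) /\
    (forall (T : nat) (L : nat -> 'I_n -> R) (t : nat),
       (1 <= t)%N -> (t <= T - h)%N ->
       D h (Lpow L gamma) t =
       \sum_(pi : {ffun 'I_h -> 'I_k})
          \prod_(r < k) D (hp pi r) (Lcoord L (jp pi r)) (t + tp pi r)%N).
(* The identity holds for every time t. *)
Proof.
move=> n_gt0 k; pose j0 : 'I_n := Ordinal n_gt0.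
pose colour (r : 'I_k) := nth j0 (expand gamma) r.
exists mult, offset, (fun _ => colour).
split; [|split; [|split; [|split; [|split]]]].
- by move=> pi r; rewrite (leq_trans _ (offset_mult_le pi r)) ?leq_addl.
- by [].
- exact: sum_mult.
- exact: offset_mult_le.
- by move=> pi j; rewrite card_colour.
- move=> T L t _ _; rewrite -D_prod; apply: eq_D => s.
  by rewrite /Lpow -(prod_colour gamma _ j0).
Qed.
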